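(* Let $S$ and $T$ be linear relations between two vector spaces $\mathcal{H}$ and $\mathcal{K}$ (i.e. linear subspaces of $\mathcal{H}\times\mathcal{K}$). Then the following three statements are equivalent: (i) $S\subset T$; (ii) $\ker S\subset \ker T$ and $\operatorname{ran} S\subset \operatorname{ran}(S\cap T)$; (iii) $\operatorname{ran} S\subset \operatorname{ran} T$ and $\ker(S\vee T)\subset \ker T$.
   Context: For a linear relation $R\subset \mathcal{H}\times\mathcal{K}$: $\operatorname{ran} R=\{k:(h,k)\in R \text{ for some } h\}$ and $\ker R=\{h:(h,0)\in R\}$. $S\cap T$ is the set-theoretic intersection of the subspaces $S,T$ (again a linear relation), and $S\vee T$ denotes the linear span of $S\cup T$ in $\mathcal{H}\times\mathcal{K}$. *)

From HB Require Import structures.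
From mathcomp Require Import all_boot all_order all_algebra.
Set Implicit Arguments. Unset Strict Implicit. Unset Printing Implicit Defensive.
Import GRing.Theory.
Local Open Scope ring_scope.

Definition rel_ (F : fieldType) (H K : lmodType F) := H -> K -> Prop.

Definition is_linrel (F : fieldType) (H K : lmodType F) (R : rel_ H K) : Prop :=
  [/\ R 0 0,
      (forall h k h' k', R h k -> R h' k' -> R (h + h') (k + k')) &
      (forall (a : F) h k, R h k -> R (a *: h) (a *: k))].

Definition rsub (F : fieldType) (H K : lmodType F) (S T : rel_ H K) : Prop :=
  forall h k, S h k -> T h k.

Definition ran (F : fieldType) (H K : lmodType F) (R : rel_ H K) : K -> Prop :=
  fun k => exists h, R h k.

Definition ker (F : fieldType) (H K : lmodType F) (R : rel_ H K) : H -> Prop :=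
  fun h => R h 0.

Definition psub (T : Type) (A B : T -> Prop) : Prop := forall x, A x -> B x.

Definition rcap (F : fieldType) (H K : lmodType F) (S T : rel_ H K) : rel_ H K :=
  fun h k => S h k /\ T h k.

(* linear span of S ∪ T: the smallest linear relation containing S and T *)
Definition rvee (F : fieldType) (H K : lmodType F) (S T : rel_ H K) : rel_ H K :=
  fun h k => forall U : rel_ H K, is_linrel U -> rsub S U -> rsub T U -> U h k.

(* A pair (h, k) of S lies in T as soon as T contains some (h', k) with
   h - h' in ker T.  For (ii) => (i) take (h', k) in S ∩ T, so that
   h - h' lies in ker S; for (iii) => (i) take (h', k) in T, so that
   h - h' lies in ker (S ∨ T). *)
From mathcomp Require Import all_boot all_order all_algebra.
Set Implicit Arguments. Unset Strict Implicit. Unset Printing Implicit Defensive.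
Import GRing.Theory.
Local Open Scope ring_scope.

Section LinearRelations.

Variables (F : fieldType) (H K : lmodType F).
Implicit Types (S T U V : rel_ H K).

Lemma linrelB V h k h' k' :
  is_linrel V -> V h k -> V h' k' -> V (h - h') (k - k').
Proof.
case=> _ VD VZ Vhk Vhk'; apply: VD => //.
by have := VZ (-1) _ _ Vhk'; rewrite !scaleN1r.
Qed.

Lemma linrel_rvee S T : is_linrel (rvee S T).
Proof.
split=> [U [] //|h k h' k' V V' U hU sU tU|a h k V U hU sU tU].
- by case: (hU) => _ UD _; apply: UD; [exact: V | exact: V'].
- by case: (hU) => _ _ UZ; apply: UZ; exact: V.
Qed.

Lemma rsubxx S : rsub S S.
Proof. by []. Qed.

Lemma rsub_rvee_l S T : rsub S (rvee S T).
Proof. by move=> h k Shk U _ sU _; exact: sU. Qed.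

Lemma rsub_rvee_r S T : rsub T (rvee S T).
Proof. by move=> h k Thk U _ _ tU; exact: tU. Qed.

Lemma rvee_min S T U :
  is_linrel U -> rsub S U -> rsub T U -> rsub (rvee S T) U.
Proof. by move=> hU sU tU h k; apply. Qed.

Lemma rsub_ker S T : rsub S T -> psub (ker S) (ker T).
Proof. by move=> sT h; exact: sT. Qed.

Lemma rsub_ran S T : rsub S T -> psub (ran S) (ran T).
Proof. by move=> sT k [h Shk]; exists h; exact: sT. Qed.

Lemma rsub_ran_rcap S T : rsub S T -> psub (ran S) (ran (rcap S T)).
Proof. by move=> sT k [h Shk]; exists h; split=> //; exact: sT. Qed.

Lemma linrel_ker_shift T h h' k :
  is_linrel T -> ker T (h - h') -> T h' k -> T h k.
Proof. by case=> _ TD _ Th Th'; have := TD _ _ _ _ Th Th'; rewrite subrK add0r. Qed.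

Lemma rsub_of_ran_rcap_ker S T V :
    is_linrel V -> is_linrel T -> rsub S V ->
    psub (ran S) (ran (rcap V T)) -> psub (ker V) (ker T) -> rsub S T.
Proof.
move=> hV hT sV ranS kerV h k Shk.
have [h' [Vh'k Th'k]] := ranS k (ex_intro _ h Shk).
have kerV_hh' : ker V (h - h').
  by rewrite /ker -(subrr k); exact: linrelB (sV _ _ Shk) _.
exact: linrel_ker_shift (kerV _ kerV_hh') Th'k.
Qed.

End LinearRelations.

Arguments rsubxx {F H K S}.

Theorem proposition3p1 (F : fieldType) (H K : lmodType F) (S T : rel_ H K)
    (hS : is_linrel S) (hT : is_linrel T) :
  (rsub S T <-> psub (ker S) (ker T) /\ psub (ran S) (ran (rcap S T))) /\
  (rsub S T <-> psub (ran S) (ran T) /\ psub (ker (rvee S T)) (ker T)).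
Proof.
split; split.
- by move=> sT; split; [exact: rsub_ker | exact: rsub_ran_rcap].
- by case=> kerS ranS; exact: rsub_of_ran_rcap_ker hS hT rsubxx ranS kerS.
- by move=> sT; split; [exact: rsub_ran | exact: rsub_ker (rvee_min hT sT rsubxx)].
- case=> ranS kerV; apply: (rsub_of_ran_rcap_ker (linrel_rvee S T) hT) kerV.
    exact: rsub_rvee_l.
  move=> k /ranS [h Thk]; exists h; split=> //; exact: rsub_rvee_r.
Qed.
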